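(* Let $(M,d)$ be a complete geodesic space satisfying the non-expansive projection property $(NE)$: for all closed weakly convex sets $C\subset M$ and all $x,y\in M$, $d(x_C,y_C)\le d(x,y)$ whenever $x_C\in\pi_C(x)$ and $y_C\in\pi_C(y)$. Then $(M,d)$ satisfies the symmetric orthogonality property $(SO)$.
   Context: Geodesics are maps $\gamma:[0,1]\to M$ with $d(\gamma_t,\gamma_s)=|t-s|d(\gamma_0,\gamma_1)$. For geodesics with $p=\gamma_0=\eta_0$, $\gamma\perp_p\eta$ means $d(p,\gamma_t)\le d(\eta_s,\gamma_t)$ for all $s,t\in[0,1]$; $(SO)$ means $\gamma\perp_p\eta$ implies $\eta\perp_p\gamma$ for all such geodesics. $C$ is weakly convex if any two of its points are joined by some geodesic in $C$. $\pi_C(x)$ is the set of points of $C$ at distance $\inf_{z\in C}d(x,z)$ from $x$. *)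

From Stdlib Require Import Reals.
Open Scope R_scope.

Section MetricDefs.
Variables (M : Type) (d : M -> M -> R).

Definition is_metric : Prop :=
  (forall x y, 0 <= d x y) /\
  (forall x y, d x y = 0 <-> x = y) /\
  (forall x y, d x y = d y x) /\
  (forall x y z, d x z <= d x y + d y z).

Definition in01 (t : R) : Prop := 0 <= t <= 1.

(* a geodesic: a map [0,1] -> M (represented by R -> M, only values on [0,1]
   matter) with d(g t, g s) = |t - s| d(g 0, g 1) *)
Definition geodesic (g : R -> M) : Prop :=
  forall t s, in01 t -> in01 s -> d (g t) (g s) = Rabs (t - s) * d (g 0) (g 1).

Definition geodesic_space : Prop :=
  forall x y, exists g, geodesic g /\ g 0 = x /\ g 1 = y.

Definition cauchy_seq (u : nat -> M) : Prop :=
  forall eps, 0 < eps -> exists N, forall m n, (N <= m)%nat -> (N <= n)%nat ->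
    d (u m) (u n) < eps.

Definition converges_to (u : nat -> M) (l : M) : Prop :=
  forall eps, 0 < eps -> exists N, forall n, (N <= n)%nat -> d (u n) l < eps.

Definition complete : Prop :=
  forall u, cauchy_seq u -> exists l, converges_to u l.

Definition closed_set (C : M -> Prop) : Prop :=
  forall x, ~ C x -> exists r, 0 < r /\ forall y, d x y < r -> ~ C y.

Definition weakly_convex (C : M -> Prop) : Prop :=
  forall x y, C x -> C y ->
    exists g, geodesic g /\ g 0 = x /\ g 1 = y /\ (forall t, in01 t -> C (g t)).

Definition metric_proj (C : M -> Prop) (x z : M) : Prop :=
  C z /\ forall w, C w -> d x z <= d x w.

Definition NE_property : Prop :=
  forall C : M -> Prop, closed_set C -> weakly_convex C ->
    forall x y xC yC, metric_proj C x xC -> metric_proj C y yC ->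
      d xC yC <= d x y.

Definition orth (p : M) (gam eta : R -> M) : Prop :=
  forall s t, in01 s -> in01 t -> d p (gam t) <= d (eta s) (gam t).

Definition SO_property : Prop :=
  forall (p : M) (gam eta : R -> M), geodesic gam -> geodesic eta ->
    gam 0 = p -> eta 0 = p -> orth p gam eta -> orth p eta gam.

End MetricDefs.

(* The trace C of the geodesic eta is closed and weakly convex. The hypothesis
   gamma ⊥_p eta says exactly that p = eta 0 is a nearest point of C to each
   gamma s, while eta t is its own nearest point. Applying (NE) to these two
   projections gives d(p, eta t) <= d(gamma s, eta t), i.e. eta ⊥_p gamma. *)
From Pilot Require Import Defs.
From Stdlib Require Import Reals Lra Psatz.
Open Scope R_scope.

(* Geodesics are only constrained on [0,1]; precomposing with [clamp01] yields
   a map on all of R to which Stdlib's continuity lemmas apply. *)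
Definition clamp01 (u : R) : R := Rmax 0 (Rmin 1 u).

Lemma clamp01_in01 (u : R) : in01 (clamp01 u).
Proof. unfold clamp01, in01, Rmax, Rmin; repeat destruct Rle_dec; lra. Qed.

Lemma clamp01_id (u : R) : in01 u -> clamp01 u = u.
Proof. unfold clamp01, in01, Rmax, Rmin; intros; repeat destruct Rle_dec; lra. Qed.

Lemma clamp01_lipschitz (u v : R) : Rabs (clamp01 u - clamp01 v) <= Rabs (u - v).
Proof.
  unfold clamp01, Rmax, Rmin; repeat destruct Rle_dec;
  unfold Rabs; repeat destruct Rcase_abs; lra.
Qed.

Section GeodesicTrace.
Variables (M : Type) (d : M -> M -> R).
Hypothesis d_metric : is_metric M d.

Definition geodesic_trace (eta : R -> M) (z : M) : Prop :=
  exists u, in01 u /\ z = eta u.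

Lemma dist_geodesic_clamp01_continuous (eta : R -> M) (x : M) :
  geodesic M d eta -> continuity (fun u => d x (eta (clamp01 u))).
Proof.
  destruct d_metric as [d_ge0 [_ [d_sym d_tri]]].
  intros eta_geo c eps eps_gt0.
  set (D := d (eta 0) (eta 1)).
  assert (D_ge0 : 0 <= D) by apply d_ge0.
  exists (eps / (D + 1)); split; [apply Rdiv_lt_0_compat; lra|].
  intros y [_ y_near]; simpl in *; unfold R_dist in *.
  assert (dyc : d (eta (clamp01 y)) (eta (clamp01 c)) < eps).
  { rewrite eta_geo by apply clamp01_in01; fold D.
    assert (clamp_yc := clamp01_lipschitz y c).
    assert (0 <= Rabs (y - c)) by apply Rabs_pos.
    apply Rle_lt_trans with (Rabs (y - c) * (D + 1)); [nra|].
    apply Rlt_le_trans with (eps / (D + 1) * (D + 1));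
      [apply Rmult_lt_compat_r; lra | right; field; lra]. }
  assert (T1 := d_tri x (eta (clamp01 c)) (eta (clamp01 y))).
  assert (T2 := d_tri x (eta (clamp01 y)) (eta (clamp01 c))).
  rewrite (d_sym (eta (clamp01 c))) in T1.
  unfold Rabs; destruct Rcase_abs; lra.
Qed.

(* A point off the trace is at positive distance from it, since the distance
   to the trace is attained on the compact interval [0,1]. *)
Lemma geodesic_trace_closed (eta : R -> M) :
  geodesic M d eta -> Pilot.Defs.closed_set M d (geodesic_trace eta).
Proof.
  destruct d_metric as [d_ge0 [d_eq0 _]].
  intros eta_geo x x_off.
  set (f := fun u => d x (eta (clamp01 u))).
  destruct (continuity_ab_min f 0 1 ltac:(lra)
              (fun c _ => dist_geodesic_clamp01_continuous eta x eta_geo c))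
    as [u0 [f_min u0_in]].
  assert (f_pos : 0 < f u0).
  { destruct (d_ge0 x (eta (clamp01 u0))) as [pos|zero]; [exact pos|].
    exfalso; apply x_off; exists (clamp01 u0).
    split; [apply clamp01_in01 | apply d_eq0; unfold f in zero; lra]. }
  exists (f u0); split; [exact f_pos|].
  intros y y_near [u [u_in ->]].
  assert (f_u := f_min u u_in); unfold f in f_u; rewrite (clamp01_id u u_in) in f_u.
  unfold f in y_near; lra.
Qed.

Lemma geodesic_trace_weakly_convex (eta : R -> M) :
  geodesic M d eta -> weakly_convex M d (geodesic_trace eta).
Proof.
  intros eta_geo x y [a [a_in ->]] [b [b_in ->]].
  set (lerp := fun t => a + t * (b - a)).
  assert (lerp_in : forall t, in01 t -> in01 (lerp t)).
  { unfold in01, lerp in *; intros t t_in; split; nra. }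
  assert (lerp0 : lerp 0 = a) by (unfold lerp; ring).
  assert (lerp1 : lerp 1 = b) by (unfold lerp; ring).
  exists (fun t => eta (lerp t)); split; [|split; [|split]].
  - intros t s t_in s_in.
    rewrite !eta_geo by auto; rewrite lerp0, lerp1, (eta_geo a b a_in b_in).
    unfold lerp; replace (a + t * (b - a) - (a + s * (b - a))) with ((t - s) * (b - a)) by ring.
    rewrite Rabs_mult, (Rabs_minus_sym a b); ring.
  - now rewrite lerp0.
  - now rewrite lerp1.
  - intros t t_in; exists (lerp t); auto.
Qed.

Lemma metric_proj_self (C : M -> Prop) (x : M) : C x -> metric_proj M d C x x.
Proof.
  destruct d_metric as [d_ge0 [d_eq0 _]].
  intros Cx; split; [exact Cx|].
  intros w _; replace (d x x) with 0 by (symmetry; apply d_eq0; reflexivity).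
  apply d_ge0.
Qed.

Lemma orth_metric_proj (p : M) (gam eta : R -> M) (s : R) :
  eta 0 = p -> orth M d p gam eta -> in01 s ->
  metric_proj M d (geodesic_trace eta) (gam s) p.
Proof.
  destruct d_metric as [_ [_ [d_sym _]]].
  intros eta0 gam_orth s_in; split.
  - exists 0; split; [unfold in01; lra | auto].
  - intros w [u [u_in ->]].
    rewrite (d_sym (gam s) p), (d_sym (gam s) (eta u)); apply gam_orth; auto.
Qed.
End GeodesicTrace.

Theorem proposition17 (M : Type) (d : M -> M -> R) :
  is_metric M d -> complete M d -> geodesic_space M d -> NE_property M d ->
  SO_property M d.
Proof.
  intros d_metric _ _ NE p gam eta gam_geo eta_geo gam0 eta0 gam_orth s t s_in t_in.
  apply (NE (geodesic_trace M eta)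
            (geodesic_trace_closed M d d_metric eta eta_geo)
            (geodesic_trace_weakly_convex M d eta eta_geo)
            (gam s) (eta t) p (eta t)).
  - exact (orth_metric_proj M d d_metric p gam eta s eta0 gam_orth s_in).
  - apply metric_proj_self; [exact d_metric | exists t; auto].
Qed.
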